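(* Let $\mathcal{E}=G_2([-1,1])$ be the set of the $256$ global maps of elementary cellular automata. Under the equivalence relation $\sim$ (generated by state permutation, reflection, shift and scaling, as defined in the context) restricted to $\mathcal{E}$, the set $\mathcal{E}$ splits into exactly $81$ equivalence classes.
   Context: For finite $M=\{j_1<\dots<j_m\}\subset\mathbb{Z}$ and $f:\{0,1\}^m\to\{0,1\}$, $\Phi^M_f(x)_i=f(x_{i+j_1}\dots x_{i+j_m})$ on $\{0,1\}^{\mathbb{Z}}$; $G_2([-1,1])=\{\Phi^{\{-1,0,1\}}_f\mid f:\{0,1\}^3\to\{0,1\}\}$. Operators on global maps: $\sigma\Phi=\sigma\circ\Phi$ with $(\sigma x)_i=x_{i+1}$; $\hat c\Phi(x)=c\Phi(cx)$ where $c$ swaps $0$ and $1$ in every cell; $\hat r\Phi(x)=r\Phi(rx)$ with $(rx)_i=x_{-i}$. $\Phi\cong\Psi$ iff $\Psi=\tau\Phi$ for some $\tau$ in the group generated by $\sigma,\hat r,\hat c$. Scaling: for a positive rational $v$ and a global map with a representation $\Phi=\Phi^M_f$ where $vM=\{vi\mid i\in M\}\subseteq\mathbb{Z}$, $\hat s_v\Phi=\Phi^{vM}_f$. $\Phi\sim\Psi$ iff there are global maps $\Phi',\Psi'$ and a positive rational $v$ with $\Phi\cong\Phi'$, $\Psi\cong\Psi'$ and $\Psi'=\hat s_v\Phi'$. *)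

From mathcomp Require Import all_boot all_order all_algebra.
From Stdlib Require Import Relations.
Set Implicit Arguments. Unset Strict Implicit. Unset Printing Implicit Defensive.
Import Order.TTheory GRing.Theory Num.Theory.
Local Open Scope ring_scope.

Definition config := int -> bool.
Definition gmap := config -> config.

(* Phi^M_f(x)_i = f(x_{i+j_1} ... x_{i+j_m}), M = [:: j_1; ...; j_m]
   listed in strictly increasing order.  f is only ever applied to words
   of length m = size M, so f : seq bool -> bool represents an arbitrary
   f : {0,1}^m -> {0,1}. *)
Definition phi (M : seq int) (f : seq bool -> bool) : gmap :=
  fun x i => f [seq x (i + j) | j <- M].

Definition ECA (Phi : gmap) : Prop :=
  exists f : seq bool -> bool, Phi = phi [:: -1; 0; 1] f.

Definition shift (x : config) : config := fun i => x (i + 1).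
Definition shiftinv (x : config) : config := fun i => x (i - 1).
Definition cswap (x : config) : config := fun i => ~~ x i.
Definition refl (x : config) : config := fun i => x (- i).

Definition sigmaOp (Phi : gmap) : gmap := fun x => shift (Phi x).
Definition sigmaInvOp (Phi : gmap) : gmap := fun x => shiftinv (Phi x).
Definition cHat (Phi : gmap) : gmap := fun x => cswap (Phi (cswap x)).
Definition rHat (Phi : gmap) : gmap := fun x => refl (Phi (refl x)).

(* The group generated by sigma, rHat, cHat: all finite compositions of
   the generators and their inverses (rHat, cHat are involutions, the
   inverse of sigma is sigmaInvOp). *)
Inductive in_group : (gmap -> gmap) -> Prop :=
| grp_id : in_group (fun Phi => Phi)
| grp_sigma t : in_group t -> in_group (fun Phi => sigmaOp (t Phi))
| grp_sigmainv t : in_group t -> in_group (fun Phi => sigmaInvOp (t Phi))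
| grp_r t : in_group t -> in_group (fun Phi => rHat (t Phi))
| grp_c t : in_group t -> in_group (fun Phi => cHat (t Phi)).

Definition cong (Phi Psi : gmap) : Prop :=
  exists t, in_group t /\ Psi = t Phi.

Definition scaled (v : rat) (Phi Psi : gmap) : Prop :=
  exists (M : seq int) (f : seq bool -> bool) (vM : seq int),
    sorted (fun a b : int => a < b) M /\
    Phi = phi M f /\
    [seq (j%:~R : rat) | j <- vM] = [seq v * (j%:~R : rat) | j <- M] /\
    Psi = phi vM f.

Definition sim (Phi Psi : gmap) : Prop :=
  exists (Phi' Psi' : gmap) (v : rat),
    0 < v /\ cong Phi Phi' /\ cong Psi Psi' /\ scaled v Phi' Psi'.

(* equivalence relation generated by sim (coincides with sim when sim is
   an equivalence relation, as stated in the paper) *)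
Definition simE : gmap -> gmap -> Prop := clos_refl_sym_trans gmap sim.

From mathcomp Require Import all_boot all_order all_algebra.
From mathcomp Require Import ring zify.
From Stdlib Require Import Relations FunctionalExtensionality.
Set Implicit Arguments. Unset Strict Implicit. Unset Printing Implicit Defensive.
Import Order.TTheory GRing.Theory Num.Theory.

(* Feed a global map the step configuration that is a left of a cell p, b at p and c
   right of p, and read cell q: as a function of (a, b, c) this is an 8-entry truth
   table, a step response of the map.  Shifts only move q, reflection and
   complementation reverse and complement the tables, and scaling by v samples the
   step at the points v j, which either hit p (same responses) or straddle it, so that
   b is never seen.  Hence the closure of the step responses under these three table
   operations is invariant under ~.  For an ECA it is generated by five responses and
   is computable.  Taking in each class of the graph spanned by reflection,
   complementation and the rescaling that turns a two-cell rule into a rule ignoring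
   its centre the rule of least Wolfram number gives 81 rules with pairwise distinct
   invariants, and every ECA is joined to one of them. *)

Local Open Scope ring_scope.

(** * Truth tables and step responses *)

Definition table (g : bool -> bool -> bool -> bool) : seq bool :=
  [:: g false false false; g false false true; g false true false; g false true true;
      g true false false; g true false true; g true true false; g true true true].

Definition lookup (s : seq bool) (a b c : bool) : bool := nth false s (4 * a + 2 * b + c)%N.

Lemma lookup_table g a b c : lookup (table g) a b c = g a b c.
Proof. by case: a; case: b; case: c. Qed.

Lemma eq_table g h : (forall a b c, g a b c = h a b c) -> table g = table h.
Proof. by move=> e; rewrite /table !e. Qed.

Definition rev_table s := table (fun a b c => lookup s c b a).
Definition compl_table s := table (fun a b c => ~~ lookup s (~~ a) (~~ b) (~~ c)).
(* The response of a scaled map when the step falls strictly between two sampled cells. *)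
Definition skip_table s := table (fun a _ c => lookup s a c c).

Definition step (p : int) (a b c : bool) : config :=
  fun i => if i < p then a else if i == p then b else c.

Definition step_response (Phi : gmap) (t : seq bool) : Prop :=
  exists p q : int, t = table (fun a b c => Phi (step p a b c) q).

Inductive table_closure (P : seq bool -> Prop) : seq bool -> Prop :=
| tcl_base t : P t -> table_closure P t
| tcl_skip t : table_closure P t -> table_closure P (skip_table t)
| tcl_rev t : table_closure P t -> table_closure P (rev_table t)
| tcl_compl t : table_closure P t -> table_closure P (compl_table t).

Lemma table_closure_sub (P Q : seq bool -> Prop) :
  (forall t, P t -> table_closure Q t) -> forall t, table_closure P t -> table_closure Q t.
Proof.
move=> PQ t; elim=> {t} [t /PQ //|t _|t _|t _];
  by [apply: tcl_skip | apply: tcl_rev | apply: tcl_compl].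
Qed.

Definition invariant (Phi : gmap) : seq bool -> Prop := table_closure (step_response Phi).

Definition same_invariant (Phi Psi : gmap) : Prop :=
  forall t, invariant Phi t <-> invariant Psi t.

Lemma gmap_ext (Phi Psi : gmap) : (forall x i, Phi x i = Psi x i) -> Phi = Psi.
Proof. by move=> e; do 2!apply: functional_extensionality => ?; apply: e. Qed.

(** * Invariance under ~ *)

Lemma sigmaOpK Phi : sigmaInvOp (sigmaOp Phi) = Phi.
Proof. by apply: gmap_ext => x i; rewrite /sigmaInvOp /shiftinv /sigmaOp /shift subrK. Qed.

Lemma sigmaInvOpK Phi : sigmaOp (sigmaInvOp Phi) = Phi.
Proof. by apply: gmap_ext => x i; rewrite /sigmaInvOp /shiftinv /sigmaOp /shift addrK. Qed.

Lemma cswapK : involutive cswap.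
Proof. by move=> x; apply: functional_extensionality => i; rewrite /cswap negbK. Qed.

Lemma reflK : involutive refl.
Proof. by move=> x; apply: functional_extensionality => i; rewrite /refl opprK. Qed.

Lemma cHatK Phi : cHat (cHat Phi) = Phi.
Proof. by apply: gmap_ext => x i; rewrite /cHat !cswapK. Qed.

Lemma rHatK Phi : rHat (rHat Phi) = Phi.
Proof. by apply: gmap_ext => x i; rewrite /rHat !reflK. Qed.

Lemma cswap_step p a b c : cswap (step p a b c) = step p (~~ a) (~~ b) (~~ c).
Proof.
by apply: functional_extensionality => i; rewrite /cswap /step; case: (i < p); case: (i == p).
Qed.

Lemma refl_step p a b c : refl (step p a b c) = step (- p) c b a.
Proof.
apply: functional_extensionality => i; rewrite /refl /step ltrNl eqr_oppLR.
by case: (ltgtP i (- p)).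
Qed.

Lemma step_response_sigmaOp Phi t : step_response (sigmaOp Phi) t -> invariant Phi t.
Proof. by case=> p [q ->]; apply: tcl_base; exists p, (q + 1). Qed.

Lemma step_response_sigmaInvOp Phi t : step_response (sigmaInvOp Phi) t -> invariant Phi t.
Proof. by case=> p [q ->]; apply: tcl_base; exists p, (q - 1). Qed.

Lemma step_response_cHat Phi t : step_response (cHat Phi) t -> invariant Phi t.
Proof.
case=> p [q ->].
have -> : table (fun a b c => cHat Phi (step p a b c) q)
          = compl_table (table (fun a b c => Phi (step p a b c) q)).
  by apply: eq_table => a b c; rewrite /cHat cswap_step /cswap lookup_table.
by apply/tcl_compl/tcl_base; exists p, q.
Qed.

Lemma step_response_rHat Phi t : step_response (rHat Phi) t -> invariant Phi t.
Proof.
case=> p [q ->].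
have -> : table (fun a b c => rHat Phi (step p a b c) q)
          = rev_table (table (fun a b c => Phi (step (- p) a b c) (- q))).
  by apply: eq_table => a b c; rewrite /rHat refl_step lookup_table.
by apply/tcl_rev/tcl_base; exists (- p), (- q).
Qed.

Lemma same_invariant_inverse (g g' : gmap -> gmap) :
    (forall Phi t, step_response (g Phi) t -> invariant Phi t) ->
    (forall Phi t, step_response (g' Phi) t -> invariant Phi t) ->
    (forall Phi, g' (g Phi) = Phi) ->
  forall Phi, same_invariant (g Phi) Phi.
Proof.
move=> g_sub g'_sub gK Phi t; split; first exact/table_closure_sub/g_sub.
by rewrite -{1}(gK Phi); apply/table_closure_sub/g'_sub.
Qed.

Lemma in_group_same_invariant tau Phi : in_group tau -> same_invariant (tau Phi) Phi.
Proof.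
elim=> {tau} [//|tau _ IH|tau _ IH|tau _ IH|tau _ IH] t; rewrite -IH.
- exact: (same_invariant_inverse step_response_sigmaOp step_response_sigmaInvOp sigmaOpK).
- exact: (same_invariant_inverse step_response_sigmaInvOp step_response_sigmaOp sigmaInvOpK).
- exact: (same_invariant_inverse step_response_rHat step_response_rHat rHatK).
- exact: (same_invariant_inverse step_response_cHat step_response_cHat cHatK).
Qed.

Definition signal (y : rat) (a b c : bool) : bool :=
  if y < 0 then a else if y == 0 then b else c.

Lemma step_signal p a b c i : step p a b c i = signal (i - p)%:~R a b c.
Proof. by rewrite /step /signal ltrz0 intr_eq0 subr_lt0 subr_eq0. Qed.

Lemma signal_pmull v y a b c : 0 < v -> signal (v * y) a b c = signal y a b c.
Proof. by move=> v_gt0; rewrite /signal pmulr_rlt0 // mulf_eq0 gt_eqF. Qed.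

Lemma signal_int e a b c : signal e%:~R a b c = step 0 a b c e.
Proof. by rewrite /step /signal ltrz0 intr_eq0. Qed.

Lemma signal_nonint y j a b c : y \isn't a Num.int ->
  signal (y + j%:~R) a b c = step 0 a c c (Num.floor y + j).
Proof.
move=> y_nonint; have floorD : Num.floor (y + j%:~R) = Num.floor y + j.
  by rewrite floorDrz ?intr_int // intrKfloor.
rewrite /signal /step -floorD floor_lt0.
case: (y + j%:~R < 0) => //; rewrite if_same; case: ifP => // y_eq.
suff : y \is a Num.int by rewrite (negPf y_nonint).
by rewrite (_ : y = (- j)%:~R) ?intr_int //; apply/eqP; rewrite intrN -addr_eq0.
Qed.

Lemma map_scaled (T : Type) (F G : int -> T) (v : rat) M N :
    [seq (j%:~R : rat) | j <- N] = [seq v * j%:~R | j <- M] ->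
    (forall j j', (j'%:~R : rat) = v * j%:~R -> F j' = G j) ->
  map F N = map G M.
Proof.
elim: N M => [|j' N IH] [|j M] //= [e_j e_NM] FG.
by rewrite (FG _ _ e_j) (IH _ e_NM FG).
Qed.

Lemma phi_scaled_step (v : rat) M N f p q a b c : 0 < v ->
    [seq (j%:~R : rat) | j <- N] = [seq v * j%:~R | j <- M] ->
  phi N f (step p a b c) q = f [seq signal ((q - p)%:~R / v + j%:~R) a b c | j <- M].
Proof.
move=> v_gt0 e_NM; rewrite /phi; congr f; apply: (map_scaled e_NM) => j j' e_j.
rewrite step_signal -[RHS](signal_pmull _ _ _ _ v_gt0); congr signal.
by rewrite !intrD intrN e_j; field; rewrite gt_eqF.
Qed.

Lemma step_response_scaled (v : rat) M N f t : 0 < v ->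
    [seq (j%:~R : rat) | j <- N] = [seq v * j%:~R | j <- M] ->
  step_response (phi N f) t -> invariant (phi M f) t.
Proof.
move=> v_gt0 e_NM [p [q ->]]; set y := (q - p)%:~R / v.
have resp_N a b c : phi N f (step p a b c) q = f [seq signal (y + j%:~R) a b c | j <- M].
  exact: phi_scaled_step.
have [y_int | y_nonint] := boolP (y \is a Num.int).
  have y_floor : y = (Num.floor y)%:~R by apply/esym/eqP; rewrite -intrEfloor.
  apply: tcl_base; exists 0, (Num.floor y); apply: eq_table => a b c.
  rewrite resp_N /phi; congr f; apply: eq_map => j /=.
  by rewrite {1}y_floor -intrD signal_int.
have -> : table (fun a b c => phi N f (step p a b c) q)
          = skip_table (table (fun a b c => phi M f (step 0 a b c) (Num.floor y))).
  apply: eq_table => a b c; rewrite lookup_table resp_N /phi; congr f; apply: eq_map => j /=.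
  exact: signal_nonint.
by apply/tcl_skip/tcl_base; exists 0, (Num.floor y).
Qed.

Lemma scaled_same_invariant v Phi Psi : 0 < v -> scaled v Phi Psi -> same_invariant Phi Psi.
Proof.
move=> v_gt0 [M [f [N [_ [-> [e_NM ->]]]]]] t; split; apply: table_closure_sub => u.
  apply: (@step_response_scaled v^-1); first by rewrite invr_gt0.
  have := congr1 (map ( *%R v^-1)) e_NM; rewrite -!map_comp => ->.
  by apply: eq_map => j /=; rewrite mulKf ?gt_eqF.
exact: step_response_scaled v_gt0 e_NM.
Qed.

Lemma sim_same_invariant Phi Psi : sim Phi Psi -> same_invariant Phi Psi.
Proof.
case=> [Phi' [Psi' [v [v_gt0 [[tau [g_tau ->]] [[tau' [g_tau' ->]] sc]]]]]] t.
rewrite -(in_group_same_invariant _ g_tau) (scaled_same_invariant v_gt0 sc).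
exact: in_group_same_invariant Psi g_tau' t.
Qed.

Lemma simE_same_invariant Phi Psi : simE Phi Psi -> same_invariant Phi Psi.
Proof.
elim=> {Phi Psi} [Phi Psi /sim_same_invariant //|//|Phi Psi _ IH t|Phi Psi Xi _ IH _ IH' t].
- by rewrite IH.
- by rewrite IH IH'.
Qed.

(** * Elementary cellular automata *)

Definition eca (s : seq bool) : gmap :=
  phi [:: -1; 0; 1] (fun w => lookup s (nth false w 0) (nth false w 1) (nth false w 2)).
Lemma ecaE s x i : eca s x i = lookup s (x (i - 1)) (x i) (x (i + 1)).
Proof. by rewrite /eca /phi /= addr0. Qed.
Lemma ECA_eca s : ECA (eca s).
Proof. by eexists. Qed.
Lemma ECA_table Phi : ECA Phi -> exists g, Phi = eca (table g).
Proof.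
case=> f ->; exists (fun a b c => f [:: a; b; c]).
by apply: gmap_ext => x i; rewrite ecaE lookup_table /phi /= addr0.
Qed.
Definition eca_response s (d : int) := table (fun a b c => eca s (step 0 a b c) d).
Definition eca_responses s := [seq eca_response s d | d <- [:: -2; -1; 0; 1; 2]].
Lemma step_translate p a b c i : step p a b c i = step 0 a b c (i - p).
Proof. by rewrite /step subr_lt0 subr_eq0. Qed.
Lemma step_left a b c i : i < 0 -> step 0 a b c i = a.
Proof. by rewrite /step => ->. Qed.
Lemma step_right a b c i : 0 < i -> step 0 a b c i = c.
Proof. by move=> i_gt0; rewrite /step ltNge ltW //= gt_eqF. Qed.
Lemma step_response_eca s t : step_response (eca s) t <-> t \in eca_responses s.
Proof.
split=> [[p [q ->]] | /mapP [d _ ->]]; last by exists 0, d; reflexivity.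
have -> : table (fun a b c => eca s (step p a b c) q) = eca_response s (q - p).
  apply: eq_table => a b c.
  by rewrite 2!ecaE !(step_translate p) [q - 1 - p]addrAC [q + 1 - p]addrAC.
have [d_le | d_gt] := lerP (q - p) (-2).
  rewrite (_ : eca_response s _ = eca_response s (-2)) ?mem_head //.
  by apply: eq_table => a b c; rewrite 2!ecaE !step_left //; lia.
have [d_lt | d_ge] := ltrP (q - p) 2; last first.
  rewrite (_ : eca_response s _ = eca_response s 2) ?map_f ?inE ?eqxx ?orbT //.
  by apply: eq_table => a b c; rewrite 2!ecaE !step_right //; lia.
by apply: map_f; rewrite !inE; lia.
Qed.

Definition close_step (S : seq (seq bool)) : seq (seq bool) :=
  undup (S ++ flatten [seq [:: skip_table t; rev_table t; compl_table t] | t <- S]).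

Definition closedb (S : seq (seq bool)) : bool :=
  all (fun t => [&& skip_table t \in S, rev_table t \in S & compl_table t \in S]) S.

Lemma mem_iter_close_step n S t : t \in S -> t \in iter n close_step S.
Proof. by elim: n => //= n IH /IH t_in; rewrite mem_undup mem_cat t_in. Qed.

Lemma iter_close_step_closure n S t :
  t \in iter n close_step S -> table_closure (fun u => u \in S) t.
Proof.
elim: n t => [|n IH] t /=; first exact: tcl_base.
rewrite mem_undup mem_cat => /orP [/IH // | /flattenP [_ /mapP [u /IH u_cl ->]]].
by rewrite !inE => /or3P [] /eqP ->; [apply: tcl_skip | apply: tcl_rev | apply: tcl_compl].
Qed.

Lemma table_closure_closedb (P : seq bool -> Prop) S :
  closedb S -> (forall t, P t -> t \in S) -> forall t, table_closure P t -> t \in S.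
Proof.
move=> /allP S_closed PS t; elim=> {t} [t /PS //|t _ t_in|t _ t_in|t _ t_in];
  by case/and3P: (S_closed t t_in).
Qed.

Definition eca_invariant s := iter 5 close_step (eca_responses s).

Lemma eca_invariantP s t :
  closedb (eca_invariant s) -> reflect (invariant (eca s) t) (t \in eca_invariant s).
Proof.
move=> closed; apply: (iffP idP) => [/iter_close_step_closure | ].
  by apply: table_closure_sub => u /step_response_eca/tcl_base.
apply: table_closure_closedb => // u /step_response_eca; exact: mem_iter_close_step.
Qed.

Lemma nth_inj_of_uniq_map (T U : eqType) (f : T -> U) x0 s i j :
    uniq (map f s) -> (i < size s)%N -> (j < size s)%N ->
  f (nth x0 s i) = f (nth x0 s j) -> i = j.
Proof.
move=> f_uniq i_lt j_lt; rewrite -!(nth_map x0 (f x0)) // => e_ij.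
by apply/eqP; rewrite -(nth_uniq (f x0) _ _ f_uniq) ?size_map // e_ij.
Qed.

Fixpoint bool_seqs n : seq (seq bool) :=
  if n is n'.+1 then [seq b :: t | b <- [:: false; true], t <- bool_seqs n'] else [:: [::]].

Lemma mem_bool_seqs n s : (s \in bool_seqs n) = (size s == n).
Proof.
elim: n s => [|n IH] s; first by case: s.
apply/allpairsP/idP => [[[b t] /= [_ t_in ->]] | ]; first by rewrite /= eqSS -IH.
by case: s => // b s; rewrite /= eqSS -IH => s_in; exists (b, s); split => //; case: b.
Qed.

(* The [let] makes [vm_compute] build the invariant once per rule. *)
Definition profile s : seq bool :=
  let S := eca_invariant s in [seq t \in S | t <- bool_seqs 8].

Lemma profile_same_invariant s s' :
    closedb (eca_invariant s) -> closedb (eca_invariant s') ->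
    same_invariant (eca s) (eca s') ->
  profile s = profile s'.
Proof.
move=> closed closed' same; apply: eq_map => t.
by apply/(eca_invariantP _ closed)/(eca_invariantP _ closed') => /same.
Qed.

(** * The 81 classes *)

Lemma scaled_eca_refl s : scaled 1 (eca s) (eca s).
Proof.
exists [:: -1; 0; 1], (fun w => lookup s (nth false w 0) (nth false w 1) (nth false w 2)).
by exists [:: -1; 0; 1]; do 3!split=> //; apply: eq_map => j; rewrite mul1r.
Qed.

Lemma cong_sim_eca s Psi : cong Psi (eca s) -> sim Psi (eca s).
Proof.
move=> Psi_s; exists (eca s), (eca s), 1; split=> //; split=> //.
split; last exact: scaled_eca_refl.
by exists id; split; first exact: grp_id.
Qed.

Lemma sim_rev_table s : sim (eca (rev_table s)) (eca s).
Proof.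
apply: cong_sim_eca; exists rHat; split; first exact: grp_r grp_id.
by apply: gmap_ext => x i; rewrite /rHat /refl !ecaE lookup_table !opprD !opprK.
Qed.

Lemma sim_compl_table s : sim (eca (compl_table s)) (eca s).
Proof.
apply: cong_sim_eca; exists cHat; split; first exact: grp_c grp_id.
by apply: gmap_ext => x i; rewrite /cHat /cswap !ecaE lookup_table !negbK.
Qed.

Definition squeeze_table s := table (fun a b _ => lookup s a false b).
Definition spread_table s := table (fun a _ c => lookup s a c false).
Definition mid_free s := s == table (fun a _ c => lookup s a false c).
Definition right_free s := s == table (fun a b _ => lookup s a b false).

(* Up to a shift, a rule ignoring its centre reads the cells 0 and 2: it is the two-cell
   rule on the cells 0 and 1 scaled by 2. *)
Lemma sim_squeeze_table s : mid_free s -> sim (eca (squeeze_table s)) (eca s).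
Proof.
move=> /eqP s_mid; pose g w := lookup s (nth false w 0) false (nth false w 1).
exists (sigmaOp (eca (squeeze_table s))), (sigmaOp (eca s)), 2; split=> //.
split; first by exists sigmaOp; split; first exact: grp_sigma grp_id.
split; first by exists sigmaOp; split; first exact: grp_sigma grp_id.
exists [:: 0; 1], g, [:: 0; 2]; split=> //; split.
  by apply: gmap_ext => x i; rewrite /sigmaOp /shift ecaE lookup_table /phi /= addrK addr0.
split; first by rewrite /= mulr0 mulr1.
apply: gmap_ext => x i.
by rewrite /sigmaOp /shift ecaE s_mid lookup_table /phi /= addrK addr0 -addrA.
Qed.

Lemma spread_tableK s :
  right_free s -> mid_free (spread_table s) /\ squeeze_table (spread_table s) = s.
Proof.
move=> /eqP s_right; split; first by apply/eqP/eq_table => a b c; rewrite !lookup_table.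
by rewrite [RHS]s_right; apply: eq_table => a b c; rewrite !lookup_table.
Qed.

Definition neighbours s : seq (seq bool) :=
  [:: rev_table s, compl_table s
    & (if mid_free s then [:: squeeze_table s] else [::])
      ++ (if right_free s then [:: spread_table s] else [::])].

Lemma neighbours_simE s t : t \in neighbours s -> simE (eca s) (eca t).
Proof.
rewrite !inE mem_cat => /or3P [/eqP -> | /eqP -> | ].
- exact/rst_sym/rst_step/sim_rev_table.
- exact/rst_sym/rst_step/sim_compl_table.
case/orP; case: ifP => // s_free; rewrite inE => /eqP ->.
  exact/rst_sym/rst_step/sim_squeeze_table.
have [spread_mid spreadK] := spread_tableK s_free.
by apply: rst_step; rewrite -{1}spreadK; apply: sim_squeeze_table.
Qed.

Definition reach_step (S : seq (seq bool)) := undup (S ++ flatten (map neighbours S)).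

(* Any fuel is sound; 8 steps suffice for [reps] below to hold a single rule per class,
   as [uniq_profile_reps] confirms. *)
Definition reach s := iter 8 reach_step [:: s].

Lemma reach_simE s t : t \in reach s -> simE (eca s) (eca t).
Proof.
rewrite /reach; elim: 8%N t => [|n IH] t /=.
  by rewrite inE => /eqP ->; apply: rst_refl.
rewrite mem_undup mem_cat => /orP [/IH // | /flattenP [_ /mapP [u /IH s_u ->]]].
by move/neighbours_simE; apply: rst_trans.
Qed.

(* Wolfram's numbering: [lookup s a b c] is bit 4a + 2b + c of the rule number. *)
Definition rule_number (s : seq bool) : nat := foldr (fun (b : bool) n => b + n.*2)%N 0%N s.

Definition class_rep s : seq bool :=
  foldr (fun u v => if rule_number u < rule_number v then u else v)%N s (reach s).

Lemma mem_foldr_argmin (T : eqType) (f : T -> nat) x s :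
  foldr (fun u v => if f u < f v then u else v)%N x s \in x :: s.
Proof.
elim: s => [|y s IH] /=; first exact: mem_head.
case: ifP => _; rewrite !inE ?eqxx ?orbT //.
by move: IH; rewrite inE => /orP [] ->; rewrite ?orbT.
Qed.

Lemma class_rep_simE s : simE (eca s) (eca (class_rep s)).
Proof.
have := mem_foldr_argmin rule_number s (reach s); rewrite -/(class_rep s) inE.
by case/orP => [/eqP -> | /reach_simE //]; apply: rst_refl.
Qed.

Definition reps : seq (seq bool) := undup [seq class_rep s | s <- bool_seqs 8].

Lemma size_reps : size reps = 81%N.
Proof. by vm_compute. Qed.

Lemma reps_closed : all (fun r => closedb (eca_invariant r)) reps.
Proof. by vm_compute. Qed.

Lemma uniq_profile_reps : uniq [seq profile r | r <- reps].
Proof. by vm_compute. Qed.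

Lemma mem_reps r : r \in reps -> exists k : 'I_81, nth [::] reps k = r.
Proof.
move=> r_in; move: (r_in); rewrite -index_mem size_reps => k_lt.
by exists (Ordinal k_lt); rewrite nth_index.
Qed.

Theorem mainTheorem12 :
  exists reps : 'I_81 -> gmap,
    (forall k, ECA (reps k)) /\
    (forall k l, simE (reps k) (reps l) -> k = l) /\
    (forall Phi, ECA Phi -> exists k, simE Phi (reps k)).
Proof.
pose rep (k : 'I_81) := nth [::] reps k.
have lt_reps (k : 'I_81) : (k < size reps)%N by rewrite size_reps.
have rep_in k : rep k \in reps by apply: mem_nth.
exists (fun k => eca (rep k)); split; first by move=> k; apply: ECA_eca.
split=> [k l /simE_same_invariant same | Phi /ECA_table [g ->]].
  move/allP: reps_closed => closed; apply/val_inj.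
  apply: (nth_inj_of_uniq_map uniq_profile_reps (lt_reps k) (lt_reps l)).
  exact: profile_same_invariant (closed _ (rep_in k)) (closed _ (rep_in l)) same.
have [k rep_k] : exists k : 'I_81, rep k = class_rep (table g).
  by apply: mem_reps; rewrite mem_undup; apply: map_f; rewrite mem_bool_seqs.
by exists k; rewrite rep_k; apply: class_rep_simE.
Qed.
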